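(* Assume that for every $n$ and every $(x^n,y^n)$ the empirical risk $f\mapsto\frac1n\sum_i\ell(f(x_i),y_i)$ attains its minimum over $\mathcal{F}$, that $\eta:\mathbb{R}^+\to\mathbb{R}^+$ is concave and continuous with $|\ell(f(x),u)-\ell(f(x),u')|\le\eta(\ell(u,u'))$ for all $f\in\mathcal{F}$, $x\in\mathcal{X}$, $u,u'\in\mathcal{Y}$, and that there is a constant $C$ with $$\mathbb{E}\sup_{f\in\mathcal{F}}\Big|\frac1n\sum_{i=1}^n\ell(f(X_i),Y_i)-L(f,P)\Big|\le C/\sqrt n\quad\text{for all } n \text{ and all } P\in\mathcal{P}.$$ Let $e_n,d_n$ be arbitrary encoders/decoders at rate $R$, $\hat Y^n=d_n(X^n,e_n(X^n,Y^n))$, and let $\hat f_n$ be an empirical risk minimizer over $\mathcal{F}$ on $\{(X_i,\hat Y_i)\}_{i=1}^n$. Then for every $n$ and every $P\in\mathcal{P}$, $$\mathbb{E}\,L(\hat f_n,P)\le L^*(\mathcal{F},P)+2\eta\big(\mathbb{E}\,\ell_n(Y^n,\hat Y^n)\big)+2C/\sqrt n,$$ where $\ell_n(Y^n,\hat Y^n)=\frac1n\sum_{i=1}^n\ell(Y_i,\hat Y_i)$.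
   Context: $\mathcal{X}\subset\mathbb{R}^d$ measurable, $\mathcal{Y}$ finite or $\mathbb{R}$, $\mathcal{P}$ a family of distributions on $\mathcal{X}\times\mathcal{Y}$, $\ell:\mathcal{Y}\times\mathcal{Y}\to\mathbb{R}^+$, $\mathcal{F}$ a class of functions $\mathcal{X}\to\mathcal{Y}$; $L(f,P)=\mathbb{E}_P\ell(f(X),Y)$, $L^*(\mathcal{F},P)=\inf_{f\in\mathcal{F}}L(f,P)$. Training data $(X_i,Y_i)$, $i\le n$, are i.i.d. $P$; encoders $e_n:\mathcal{X}^n\times\mathcal{Y}^n\to\{1,\dots,2^{nR}\}$, decoders $d_n:\mathcal{X}^n\times\{1,\dots,2^{nR}\}\to\mathcal{Y}^n$; the generalization error is $L(\hat f_n,P)=\mathbb{E}[\ell(\hat f_n(X),Y)\mid X^n,Y^n]$ with $(X,Y)\sim P$ independent of the data. *)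

From HB Require Import structures.
From mathcomp Require Import all_boot all_order all_algebra.
From mathcomp Require Import all_classical all_reals all_analysis.
From mathcomp Require Import measurable_realfun.
Set Implicit Arguments.
Unset Strict Implicit.
Unset Printing Implicit Defensive.
Import Order.TTheory GRing.Theory Num.Theory.
Local Open Scope classical_set_scope.
Local Open Scope ring_scope.

Section Defs.
Context {R : realType}.

(** [Z 0, ..., Z (n-1)] are i.i.d. random elements of [T'] with common law [P],
    defined on the probability space [(Omega, mu)]: each is measurable, each has
    law [P], and they are mutually independent (product rule; taking some
    [A i = setT] gives the product rule for every subfamily). *)
Definition iid_sample {dO dT} {Omega : measurableType dO} {T : measurableType dT}
  (mu : probability Omega R) (n : nat) (Z : 'I_n -> Omega -> T)
  (P : probability T R) : Prop :=
  [/\ (forall i, measurable_fun setT (Z i)),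
      (forall i (A : set T), measurable A -> mu (Z i @^-1` A) = P A) &
      (forall A : 'I_n -> set T, (forall i, measurable (A i)) ->
         mu (\bigcap_i (Z i @^-1` A i)) = (\prod_(i < n) mu (Z i @^-1` A i))%E)].

Definition risk {dX dY} {X : measurableType dX} {Y : measurableType dY}
  (l : Y -> Y -> R) (f : X -> Y) (P : probability (X * Y)%type R) : \bar R :=
  (\int[P]_z (l (f z.1) z.2)%:E)%E.

Definition opt_risk {dX dY} {X : measurableType dX} {Y : measurableType dY}
  (l : Y -> Y -> R) (F : set (X -> Y)) (P : probability (X * Y)%type R) : \bar R :=
  ereal_inf [set risk l f P | f in F].

Definition emp_risk {X Y : Type} (l : Y -> Y -> R) (n : nat)
  (f : X -> Y) (xs : 'I_n -> X) (ys : 'I_n -> Y) : R :=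
  n%:R^-1 * \sum_(i < n) l (f (xs i)) (ys i).

Definition distortion {Y : Type} (l : Y -> Y -> R) (n : nat)
  (ys yh : 'I_n -> Y) : R :=
  n%:R^-1 * \sum_(i < n) l (ys i) (yh i).

Definition num_msgs (rate : R) (n : nat) : nat :=
  Num.truncn (powR 2 (n%:R * rate)).

Definition concave_on_nonneg (eta : R -> R) : Prop :=
  forall a b t, 0 <= a -> 0 <= b -> 0 <= t <= 1 ->
    t * eta a + (1 - t) * eta b <= eta (t * a + (1 - t) * b).

End Defs.

From HB Require Import structures.
From mathcomp Require Import all_boot all_order all_algebra.
From mathcomp Require Import all_classical all_reals all_analysis.
From mathcomp Require Import measurable_realfun.
From mathcomp Require Import ring lra.
Set Implicit Arguments.
Unset Strict Implicit.
Unset Printing Implicit Defensive.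
Import Order.TTheory GRing.Theory Num.Theory numFieldNormedType.Exports.
Local Open Scope classical_set_scope.
Local Open Scope ring_scope.

(** For every competitor [g] in [F], the empirical risk minimiser on the
    reconstructed labels beats [g] on those labels; moving both empirical risks
    back to the true labels costs at most [eta] of the distortion each (by the
    modulus [eta] and finite Jensen), and moving both to the true risks costs at
    most the uniform deviation each.  Taking expectations, concavity of [eta]
    (through a supergradient at the mean distortion) turns [E eta(l_n)] into
    [eta(E l_n)], and the uniform deviation bound gives [2C/sqrt n].  Nothing
    about the code is used: the bound holds for arbitrary substitute labels. *)

Section concave_functions.
Context {R : realType} {eta : R -> R}.
Hypothesis eta_concave : concave_on_nonneg eta.

Lemma concave_slope_le t m u : 0 <= t -> t < m -> m < u ->
  (m - t) * (eta u - eta m) <= (u - m) * (eta m - eta t).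
Proof.
move=> t0 tm mu.
have ut : 0 < u - t by lra.
pose lam := (u - m) / (u - t).
have lam01 : 0 <= lam <= 1.
  by apply/andP; split; [apply: divr_ge0; lra | rewrite ler_pdivrMr //; lra].
have := @eta_concave t u lam t0 (ltW (le_lt_trans t0 (lt_trans tm mu))) lam01.
have -> : lam * t + (1 - lam) * u = m by rewrite /lam; field; lra.
have -> : 1 - lam = (m - t) / (u - t) by rewrite /lam; field; lra.
move=> /(ler_wpM2r (ltW ut)).
have -> : ((u - m) / (u - t) * eta t + (m - t) / (u - t) * eta u) * (u - t)
   = (u - m) * eta t + (m - t) * eta u by field; lra.
nra.
Qed.

(* The slope is the supremum of the chord slopes to the right of [m]; the chord
   slopes to the left bound them from above. *)
Lemma concave_supergradient m : 0 < m ->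
  exists s, forall t, 0 <= t -> eta t <= eta m + s * (t - m).
Proof.
move=> m0.
pose S := [set (eta u - eta m) / (u - m) | u in [set u | m < u]].
have S_neq0 : S !=set0 by exists ((eta (m + 1) - eta m) / (m + 1 - m)), (m + 1) => //=; lra.
have S_ub t : 0 <= t -> t < m -> ubound S ((eta m - eta t) / (m - t)).
  move=> t0 tm _ [u /= mu <-].
  have := concave_slope_le t0 tm mu.
  rewrite ler_pdivrMr; last lra.
  by rewrite mulrAC ler_pdivlMr; [nra | lra].
have supS : has_sup S by split => //; exists ((eta m - eta 0) / (m - 0)); exact: S_ub.
exists (sup S) => t t0.
have [tm|mt|->] := ltgtP t m; last lra.
- have : sup S <= (eta m - eta t) / (m - t) by apply: ge_sup => //; exact: S_ub.
  by rewrite ler_pdivlMr; [nra | lra].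
- have : (eta t - eta m) / (t - m) <= sup S by apply: sup_upper_bound => //; exists t.
  by rewrite ler_pdivrMr; [nra | lra].
Qed.

Lemma concave_mean_le n (a : 'I_n -> R) : (0 < n)%N -> (forall i, 0 <= a i) ->
  n%:R^-1 * \sum_(i < n) eta (a i) <= eta (n%:R^-1 * \sum_(i < n) a i).
Proof.
move=> n_gt0 a_ge0.
have n_pos : 0 < n%:R :> R by rewrite ltr0n.
set m := n%:R^-1 * \sum_(i < n) a i.
have sum_a : \sum_(i < n) a i = n%:R * m by rewrite /m mulrA mulfV ?mul1r //; lra.
have m_ge0 : 0 <= m by rewrite /m mulr_ge0 ?invr_ge0 ?ler0n ?sumr_ge0.
have [m0|m_neq0] := eqVneq m 0.
  have a0 i : a i = 0.
    apply/eqP; move/eqP: sum_a; rewrite m0 mulr0 psumr_eq0 // => /allP.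
    by move/(_ i (mem_index_enum _)); rewrite implyTb.
  under eq_bigr do rewrite a0.
  by rewrite m0 sumr_const card_ord -[eta 0 *+ n]mulr_natl mulrA mulVf ?mul1r //; lra.
have m_gt0 : 0 < m by rewrite lt_neqAle eq_sym m_neq0.
have [s hs] := concave_supergradient m_gt0.
rewrite ler_pdivrMl //.
apply: le_trans (ler_sum _ (fun i _ => hs _ (a_ge0 i))) _.
rewrite big_split /= -mulr_sumr sumrB !sumr_const card_ord sum_a.
by rewrite -[eta m *+ n]mulr_natl -[m *+ n]mulr_natl subrr mulr0 addr0.
Qed.

End concave_functions.

Section concave_integral.
Local Open Scope ereal_scope.
Variables (R : realType) (d : measure_display) (O : measurableType d).
Variables (mu : probability O R) (eta : R -> R).
Hypotheses (eta_ge0 : forall t, (0 <= t)%R -> (0 <= eta t)%R)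
  (eta_concave : concave_on_nonneg eta).

Lemma concave_affine_majorant_ae (D : O -> R) (m : R) :
  measurable_fun setT D -> (forall w, (0 <= D w)%R) ->
  \int[mu]_w (D w)%:E = m%:E ->
  exists s, {ae mu, forall w, (eta (D w) <= eta m + s * (D w - m))%R} /\
            forall w, (0 <= eta m + s * (D w - m))%R.
Proof.
move=> mD D_ge0 intD.
have m_ge0 : (0 <= m)%R.
  by rewrite -lee_fin -intD; apply: integral_ge0 => w _; rewrite lee_fin.
(* At [m = 0] there may be no supergradient (think [sqrt]), but [D = 0] a.e. *)
have [m0|m_neq0] := eqVneq m 0%R.
  exists 0%R; split; last by move=> w; rewrite mul0r addr0; exact: eta_ge0.
  have : \int[mu]_(w in setT) `|(D w)%:E| = 0.
    by under eq_integral do rewrite gee0_abs ?lee_fin //; rewrite intD m0.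
  have mED : measurable_fun setT (fun w => (D w)%:E) by exact/measurable_EFinP.
  move/(ae_eq_integral_abs mu measurableT mED).
  by apply: filterS => w /(_ I) /= [->]; rewrite m0 mul0r addr0.
have m_gt0 : (0 < m)%R by rewrite lt_neqAle eq_sym m_neq0.
have [s hs] := concave_supergradient eta_concave m_gt0.
exists s; split; first by apply: aeW => w; exact: hs.
by move=> w; exact: le_trans (eta_ge0 (D_ge0 w)) (hs _ (D_ge0 w)).
Qed.

Lemma integral_le_concave_comp (D : O -> R) (h g : O -> \bar R) (c : R) :
  measurable_fun setT D -> (forall w, (0 <= D w)%R) ->
  \int[mu]_w (D w)%:E < +oo ->
  measurable_fun setT h -> (forall w, 0 <= h w) ->
  mu.-integrable setT g -> (forall w, 0 <= g w) -> (0 <= c)%R ->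
  (forall w, h w <= (c * eta (D w))%:E + g w) ->
  \int[mu]_w h w <= (c * eta (fine (\int[mu]_w (D w)%:E)))%:E + \int[mu]_w g w.
Proof.
move=> mD D_ge0 intD_lt mh h_ge0 ig g_ge0 c_ge0 h_le.
set m := fine _.
have intD : \int[mu]_w (D w)%:E = m%:E.
  by rewrite fineK // ge0_fin_numE //; apply: integral_ge0 => w _; rewrite lee_fin.
have iD : mu.-integrable setT (fun w => (D w)%:E).
  apply/integrableP; split; first exact/measurable_EFinP.
  by under eq_integral do rewrite gee0_abs ?lee_fin //.
have [s [hs hs_ge0]] := concave_affine_majorant_ae mD D_ge0 intD.
pose a := (c * eta m - c * s * m)%R.
apply: (@le_trans _ _ (\int[mu]_w ((a%:E + (c * s)%:E * (D w)%:E) + g w))).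
  apply: ae_ge0_le_integral => //.
  - move=> w _; apply: adde_ge0 => //; rewrite -EFinM -EFinD lee_fin.
    by have := mulr_ge0 c_ge0 (hs_ge0 w); rewrite /a; nra.
  - apply: emeasurable_funD; last exact: measurable_int ig.
    apply: emeasurable_funD; first exact: measurable_cst.
    by apply: emeasurable_funM; [exact: measurable_cst | exact/measurable_EFinP].
  - apply: filterS hs => w hw _; apply: le_trans (h_le w) _; apply: leeD2r.
    by rewrite -EFinM -EFinD lee_fin; have := ler_wpM2l c_ge0 hw; rewrite /a; nra.
have icst : mu.-integrable setT (fun=> a%:E) by exact: finite_measure_integrable_cst.
rewrite integralD //; last by apply: integrableD => //; exact: integrableZl.
rewrite integralD //; last exact: integrableZl.
rewrite integralZl // intD integral_cst //.
have -> : a%:E * mu setT = a%:E by rewrite probability_setT mule1.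
by rewrite -EFinM -EFinD leeD2r // lee_fin /a subrK.
Qed.

End concave_integral.

Section risk.
Variables (R : realType) (dX dY : measure_display).
Variables (X : measurableType dX) (Y : measurableType dY) (l : Y -> Y -> R).
Hypothesis l_ge0 : forall u v, 0 <= l u v.

Lemma risk_ge0 (f : X -> Y) (P : probability (X * Y)%type R) : (0 <= risk l f P)%E.
Proof. by apply: integral_ge0 => z _; rewrite lee_fin. Qed.

Lemma le_opt_risk_addr (F : set (X -> Y)) (P : probability (X * Y)%type R)
    (x : \bar R) (c : R) :
  (forall g, F g -> x <= risk l g P + c%:E)%E -> (x <= opt_risk l F P + c%:E)%E.
Proof.
move=> x_le; rewrite -leeBlDr //; apply: le_ereal_inf_tmp => _ [g Fg <-].
by rewrite leeBlDr //; exact: x_le.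
Qed.

End risk.

Lemma distortion_ge0 (R : realType) (Y : Type) (l : Y -> Y -> R) n (ys yh : 'I_n -> Y) :
  (forall u v, 0 <= l u v) -> 0 <= distortion l ys yh.
Proof. by move=> l_ge0; rewrite mulr_ge0 ?invr_ge0 ?ler0n ?sumr_ge0. Qed.

Lemma emp_risk_distortion_le (R : realType) (X Y : Type) (l : Y -> Y -> R)
    (eta : R -> R) n (f : X -> Y) (xs : 'I_n -> X) (ys yh : 'I_n -> Y) :
  concave_on_nonneg eta -> (0 < n)%N -> (forall u v, 0 <= l u v) ->
  (forall x u u', `|l (f x) u - l (f x) u'| <= eta (l u u')) ->
  `|emp_risk l f xs ys - emp_risk l f xs yh| <= eta (distortion l ys yh).
Proof.
move=> eta_concave n_gt0 l_ge0 eta_lip.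
rewrite /emp_risk /distortion -mulrBr -sumrB.
apply: le_trans (concave_mean_le eta_concave n_gt0 (fun i => l_ge0 (ys i) (yh i))).
rewrite normrM ger0_norm ?invr_ge0 ?ler0n // ler_wpM2l ?invr_ge0 ?ler0n //.
by apply: le_trans (ler_norm_sum _ _ _) _; apply: ler_sum => i _; exact: eta_lip.
Qed.

Section erm_on_compressed_labels.
Local Open Scope ereal_scope.
Variables (R : realType) (dX dY : measure_display).
Variables (X : measurableType dX) (Y : measurableType dY).
Variables (l : Y -> Y -> R) (F : set (X -> Y)) (eta : R -> R).
Variable P : probability (X * Y)%type R.
Hypotheses (l_ge0 : forall u v, (0 <= l u v)%R)
  (eta_ge0 : forall t, (0 <= t)%R -> (0 <= eta t)%R)
  (eta_concave : concave_on_nonneg eta)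
  (eta_lip : forall f x u u', F f -> (`|l (f x) u - l (f x) u'| <= eta (l u u'))%R).
Variables (n : nat) (dO : measure_display) (O : measurableType dO).
Variables (mu : probability O R) (Z : 'I_n -> O -> X * Y).
Hypothesis n_gt0 : (0 < n)%N.

Local Notation xs w := (fun i => (Z i w).1).
Local Notation ys w := (fun i => (Z i w).2).

Definition sup_dev w : \bar R :=
  ereal_sup [set `|(emp_risk l f (xs w) (ys w))%:E - risk l f P| | f in F].

Variables (yh : O -> 'I_n -> Y) (fhat : O -> X -> Y) (B : R).
Hypotheses (fhat_erm : forall w, F (fhat w) /\ forall g, F g ->
     (emp_risk l (fhat w) (xs w) (yh w) <= emp_risk l g (xs w) (yh w))%R)
  (sup_dev_meas : measurable_fun setT sup_dev)
  (sup_dev_le : \int[mu]_w sup_dev w <= B%:E).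

(* Otherwise [sup_dev] would be identically [+oo]. *)
Lemma risk_fin_num f : F f -> risk l f P \is a fin_num.
Proof.
move=> Ff; rewrite ge0_fin_numE ?risk_ge0 // ltNge leye_eq; apply/negP => /eqP rf.
have : \int[mu]_w sup_dev w = \int[mu]_w (cst +oo) w.
  apply: eq_integral => w _ /=; apply/eqP; rewrite eq_le leey /=.
  by apply: ereal_sup_ubound; exists f => //; rewrite rf.
rewrite integral_cst //.
have -> : +oo * mu setT = +oo by rewrite probability_setT mule1.
by move=> sd_oo; move: sup_dev_le; rewrite sd_oo leNgt ltey.
Qed.

Lemma emp_dev_le_sup_dev f w : F f ->
  (`|emp_risk l f (xs w) (ys w) - fine (risk l f P)|)%:E <= sup_dev w.
Proof.
move=> Ff; apply: ereal_sup_ubound; exists f => //.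
by move: (risk_fin_num Ff); case: (risk l f P).
Qed.

Lemma sup_dev_ge0 w : 0 <= sup_dev w.
Proof. exact: le_trans (emp_dev_le_sup_dev w (fhat_erm w).1). Qed.

Lemma erm_risk_le g w : F g ->
  risk l (fhat w) P <= (2 * eta (distortion l (ys w) (yh w)))%:E
                       + ((fine (risk l g P))%:E + (sup_dev w + sup_dev w)).
Proof.
move=> Fg; have [Ffhat fhat_min] := fhat_erm w.
have dist_fhat := emp_risk_distortion_le (xs w) (ys w) (yh w)
  eta_concave n_gt0 l_ge0 (fun x u u' => eta_lip x u u' Ffhat).
have dist_g := emp_risk_distortion_le (xs w) (ys w) (yh w)
  eta_concave n_gt0 l_ge0 (fun x u u' => eta_lip x u u' Fg).
have min_g := fhat_min g Fg.
rewrite -(fineK (risk_fin_num Ffhat)).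
move: (emp_dev_le_sup_dev w Ffhat) (emp_dev_le_sup_dev w Fg).
case: (sup_dev w) => [r| |] //; last by move=> _ _; rewrite /= addey // leey.
rewrite -!EFinD !lee_fin !ler_norml.
by move: dist_fhat dist_g; rewrite !ler_norml; lra.
Qed.

Lemma erm_expected_risk_le :
  measurable_fun setT (fun w => risk l (fhat w) P) ->
  measurable_fun setT (fun w => distortion l (ys w) (yh w)) ->
  \int[mu]_w (distortion l (ys w) (yh w))%:E < +oo ->
  \int[mu]_w risk l (fhat w) P <=
    opt_risk l F P + (2 * eta (fine (\int[mu]_w (distortion l (ys w) (yh w))%:E)))%:E
    + (2 * B)%:E.
Proof.
move=> mrisk mdist dist_fin.
have sd_int : mu.-integrable setT sup_dev.
  apply/integrableP; split => //.
  under eq_integral do rewrite gee0_abs ?sup_dev_ge0 //.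
  exact: le_lt_trans sup_dev_le (ltry _).
rewrite -addeA -EFinD; apply: le_opt_risk_addr => // g Fg.
set r := fine (risk l g P); rewrite -(fineK (risk_fin_num Fg)) -/r -EFinD.
have r_ge0 : (0 <= r)%R by apply: fine_ge0; exact: risk_ge0.
have r_int : mu.-integrable setT (fun=> r%:E) by exact: finite_measure_integrable_cst.
have sd2_int : mu.-integrable setT (fun w => sup_dev w + sup_dev w) by exact: integrableD.
have rsd_int : mu.-integrable setT (fun w => r%:E + (sup_dev w + sup_dev w)).
  exact: integrableD.
apply: le_trans (integral_le_concave_comp eta_ge0 eta_concave mdist
  (fun w => distortion_ge0 _ _ l_ge0) dist_fin mrisk (fun w => risk_ge0 l_ge0 _ _)
  rsd_int _ _ (fun w => erm_risk_le w Fg)) _ => [w | // |].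
  by rewrite !adde_ge0 ?sup_dev_ge0 ?lee_fin.
rewrite integralD // integralD // integral_cst //.
have -> : r%:E * mu setT = r%:E by rewrite probability_setT mule1.
have sd_ge0 : 0 <= \int[mu]_w sup_dev w by apply: integral_ge0 => w _; exact: sup_dev_ge0.
move: sup_dev_le sd_ge0; case: (\int[mu]_w sup_dev w) => [b| |] //.
by rewrite -!EFinD !lee_fin; lra.
Qed.

End erm_on_compressed_labels.

Theorem mainTheorem5
  (R : realType) (dX dY : measure_display)
  (X : measurableType dX) (Y : measurableType dY)
  (PP : set (probability (X * Y)%type R))
  (l : Y -> Y -> R) (F : set (X -> Y)) (eta : R -> R) (C rate : R)
  (l_ge0 : forall u v, 0 <= l u v)
  (l_meas : forall f, F f -> measurable_fun setT (fun z : X * Y => l (f z.1) z.2))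
  (erm_exists : forall (n : nat) (xs : 'I_n -> X) (ys : 'I_n -> Y),
     exists2 f, F f & forall g, F g -> emp_risk l f xs ys <= emp_risk l g xs ys)
  (eta_ge0 : forall t, 0 <= t -> 0 <= eta t)
  (eta_concave : concave_on_nonneg eta)
  (eta_cont : {within [set x : R | 0 <= x], continuous eta})
  (eta_lip : forall f x u u', F f ->
     `|l (f x) u - l (f x) u'| <= eta (l u u'))
  (unif_dev : forall (n : nat), (0 < n)%N -> forall P, PP P ->
     forall (dO : measure_display) (O : measurableType dO)
            (mu : probability O R) (Z : 'I_n -> O -> X * Y),
     iid_sample mu Z P ->
     (\int[mu]_w ereal_sup
         [set `| (emp_risk l f (fun i => (Z i w).1) (fun i => (Z i w).2))%:E
                 - risk l f P | | f in F]
        <= (C / Num.sqrt n%:R)%:E)%E)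
  (n : nat) (n_gt0 : (0 < n)%N) (P : probability (X * Y)%type R) (PP_P : PP P)
  (dO : measure_display) (O : measurableType dO) (mu : probability O R)
  (Z : 'I_n -> O -> X * Y) (Z_iid : iid_sample mu Z P)
  (enc : ('I_n -> X) -> ('I_n -> Y) -> 'I_(num_msgs rate n))
  (dec : ('I_n -> X) -> 'I_(num_msgs rate n) -> ('I_n -> Y))
  (fhat : O -> X -> Y)
  (fhat_erm : forall w,
     let xs := fun i => (Z i w).1 in
     let ys := fun i => (Z i w).2 in
     let yh := dec xs (enc xs ys) in
     F (fhat w) /\
     forall g, F g -> emp_risk l (fhat w) xs yh <= emp_risk l g xs yh)
  (fhat_meas : measurable_fun (setT : set O) ((fun w => risk l (fhat w) P) : O -> \bar R))
  (dev_meas : measurable_fun (setT : set O) ((fun w => ereal_sup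
         [set `| (emp_risk l f (fun i => (Z i w).1) (fun i => (Z i w).2))%:E
                 - risk l f P |%E | f in F]) : O -> \bar R))
  (dist_meas : measurable_fun setT (fun w =>
     let xs := fun i => (Z i w).1 in
     let ys := fun i => (Z i w).2 in
     distortion l ys (dec xs (enc xs ys))))
  (* E l_n(Y^n, Yhat^n) is finite, so that eta of it makes sense *)
  (dist_fin : (\int[mu]_w (let xs := fun i => (Z i w).1 in
                           let ys := fun i => (Z i w).2 in
                           distortion l ys (dec xs (enc xs ys)))%:E < +oo)%E) :
  (\int[mu]_w risk l (fhat w) P
     <= opt_risk l F P
        + (2 * eta (fine (\int[mu]_w (let xs := fun i => (Z i w).1 in
                                      let ys := fun i => (Z i w).2 in
                                      distortion l ys (dec xs (enc xs ys)))%:E)))%:E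
        + (2 * C / Num.sqrt n%:R)%:E)%E.
Proof.
pose yh w := dec (fun i => (Z i w).1) (enc (fun i => (Z i w).1) (fun i => (Z i w).2)).
have dev_le := unif_dev n n_gt0 P PP_P dO O mu Z Z_iid.
have := erm_expected_risk_le l_ge0 eta_ge0 eta_concave eta_lip n_gt0 (yh := yh)
  fhat_erm dev_meas dev_le fhat_meas dist_meas dist_fin.
by rewrite mulrA.
Qed.
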